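(* Let $\lambda\in\Pi(\mu,\nu,\gamma)$. (1) If $\lambda$ is an extreme point of $\Pi(\mu,\nu,\gamma)$, then it is an extreme point of $\Pi(\lambda^{XY},\gamma)$, of $\Pi(\lambda^{YZ},\mu)$ and of $\Pi(\lambda^{XZ},\nu)$. (2) If $\lambda$ is an extreme point of $\Pi(\lambda^{XY},\gamma)$ and $\lambda^{XY}$ is an extreme point of $\Pi(\mu,\nu)$, then $\lambda$ is an extreme point of $\Pi(\mu,\nu,\gamma)$. (3) Assume $\lambda=(\nu^x\times\gamma^x)\otimes\mu$, where $\lambda^{XY}=\nu^x\otimes\mu$ and $\lambda^{XZ}=\gamma^x\otimes\mu$. (a) If $\lambda$ is an extreme point of $\Pi(\lambda^{XY},\gamma)$, then $\lambda^{XZ}$ is an extreme point of $\Pi(\mu,\gamma)$. (b) If $\lambda$ is an extreme point of both $\Pi(\lambda^{XY},\gamma)$ and $\Pi(\lambda^{XZ},\nu)$, then $\lambda$ is an extreme point of $\Pi(\mu,\nu,\gamma)$.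
   Context: $X,Y,Z$ are complete separable metric spaces with Borel probability measures $\mu,\nu,\gamma$; $\Pi(\mu,\nu,\gamma)$ is the set of Borel probability measures on $X\times Y\times Z$ with those marginals; $\Pi(\mu,\nu)$, $\Pi(\mu,\gamma)$ similarly. $\lambda^{XY},\lambda^{YZ},\lambda^{XZ}$ are the push-forwards of $\lambda$ under the projections onto $X\times Y$, $Y\times Z$, $X\times Z$. $\Pi(\lambda^{XY},\gamma)=\{\rho\in\Pi(\mu,\nu,\gamma):\rho^{XY}=\lambda^{XY}\}$, and analogously $\Pi(\lambda^{YZ},\mu)$, $\Pi(\lambda^{XZ},\nu)$. For a measure $\sigma$ on $A$ and a measurable family $(\eta^a)$ of probability measures on $B$, $(\eta^a\otimes\sigma)(E\times F)=\int_E\eta^a(F)d\sigma(a)$; $\nu^x\times\gamma^x$ is the product measure on $Y\times Z$. *)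

From HB Require Import structures.
From mathcomp Require Import all_boot all_order all_algebra.
From mathcomp Require Import all_classical all_reals all_analysis.
Set Implicit Arguments. Unset Strict Implicit. Unset Printing Implicit Defensive.
Import Order.TTheory GRing.Theory Num.Theory.
Local Open Scope classical_set_scope.
Local Open Scope ring_scope.

Definition separable_space (T : topologicalType) : Prop :=
  exists D : set T, countable D /\ dense D.

Definition Borel (T : topologicalType) := g_sigma_algebraType (@open T).

Section Defs.
Context {R : realType}.
Local Open Scope ereal_scope.

Definition is_prob {d} {T : measurableType d} (m : set T -> \bar R) : Prop :=
  exists P : probability T R, forall A, measurable A -> P A = m A.

Definition projXY {dX dY dZ} {X : measurableType dX} {Y : measurableType dY}
  {Z : measurableType dZ} (l : set (X * Y * Z) -> \bar R) : set (X * Y) -> \bar R :=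
  fun E => l ((fun p => p.1) @^-1` E).
Definition projYZ {dX dY dZ} {X : measurableType dX} {Y : measurableType dY}
  {Z : measurableType dZ} (l : set (X * Y * Z) -> \bar R) : set (Y * Z) -> \bar R :=
  fun E => l ((fun p => (p.1.2, p.2)) @^-1` E).
Definition projXZ {dX dY dZ} {X : measurableType dX} {Y : measurableType dY}
  {Z : measurableType dZ} (l : set (X * Y * Z) -> \bar R) : set (X * Z) -> \bar R :=
  fun E => l ((fun p => (p.1.1, p.2)) @^-1` E).
Definition proj1 {dX dY} {X : measurableType dX} {Y : measurableType dY}
  (l : set (X * Y) -> \bar R) : set X -> \bar R :=
  fun E => l ((fun p => p.1) @^-1` E).
Definition proj2 {dX dY} {X : measurableType dX} {Y : measurableType dY}
  (l : set (X * Y) -> \bar R) : set Y -> \bar R :=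
  fun E => l ((fun p => p.2) @^-1` E).

Definition meq {d} {T : measurableType d} (m1 m2 : set T -> \bar R) : Prop :=
  forall A, measurable A -> m1 A = m2 A.

Definition Pi2 {dX dY} {X : measurableType dX} {Y : measurableType dY}
  (mu : set X -> \bar R) (nu : set Y -> \bar R) : set (set (X * Y) -> \bar R) :=
  [set r | is_prob r /\ meq (proj1 r) mu /\ meq (proj2 r) nu].

Definition Pi3 {dX dY dZ} {X : measurableType dX} {Y : measurableType dY}
  {Z : measurableType dZ} (mu : set X -> \bar R) (nu : set Y -> \bar R)
  (ga : set Z -> \bar R) : set (set (X * Y * Z) -> \bar R) :=
  [set r | is_prob r /\ meq (proj1 (projXY r)) mu /\
           meq (proj2 (projXY r)) nu /\ meq (proj2 (projXZ r)) ga].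

Definition PiXY {dX dY dZ} {X : measurableType dX} {Y : measurableType dY}
  {Z : measurableType dZ} (mu : set X -> \bar R) (nu : set Y -> \bar R)
  (ga : set Z -> \bar R) (l : set (X * Y * Z) -> \bar R) :=
  [set r | Pi3 mu nu ga r /\ meq (projXY r) (projXY l)].
Definition PiYZ {dX dY dZ} {X : measurableType dX} {Y : measurableType dY}
  {Z : measurableType dZ} (mu : set X -> \bar R) (nu : set Y -> \bar R)
  (ga : set Z -> \bar R) (l : set (X * Y * Z) -> \bar R) :=
  [set r | Pi3 mu nu ga r /\ meq (projYZ r) (projYZ l)].
Definition PiXZ {dX dY dZ} {X : measurableType dX} {Y : measurableType dY}
  {Z : measurableType dZ} (mu : set X -> \bar R) (nu : set Y -> \bar R)
  (ga : set Z -> \bar R) (l : set (X * Y * Z) -> \bar R) :=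
  [set r | Pi3 mu nu ga r /\ meq (projXZ r) (projXZ l)].

Definition extreme_point {d} {T : measurableType d}
  (S : set (set T -> \bar R)) (m : set T -> \bar R) : Prop :=
  S m /\
  forall (m1 m2 : set T -> \bar R) (t : R), S m1 -> S m2 -> (0 < t < 1)%R ->
    meq m (fun A => t%:E * m1 A + (1 - t)%:E * m2 A) -> meq m1 m2.

End Defs.

From HB Require Import structures.
From mathcomp Require Import all_boot all_order all_algebra.
From mathcomp Require Import all_classical all_reals all_analysis.
From mathcomp Require Import measurable_realfun.
Import Order.TTheory GRing.Theory Num.Theory.
Local Open Scope classical_set_scope.
Local Open Scope ring_scope.
Local Open Scope ereal_scope.

(* (1) A member of a convex subset S' of S that is extreme in S is extreme
       in S' (extreme_point_sub); the fibres Pi(l^XY, ga), Pi(l^YZ, mu),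
       Pi(l^XZ, nu) are such subsets of Pi(mu, nu, ga).
   (2) Lifting along a measurable map f (extreme_point_lift): if l is extreme
       in the fibre {r in S | f#r = f#l} and f#l is extreme in a set S2
       containing f#S, then l is extreme in S.  With f the projection onto
       X * Y this is (2).
   (3a) Write L = l^XZ = t Q1 + (1 - t) Q2 with Qi in Pi(mu, ga).  Then
       Qi << L with Radon-Nikodym densities fi, and the density lifts
       li(E) = \int_E fi(x, z) dl satisfy l = t l1 + (1 - t) l2 and
       li^XZ = Qi.  The product form l = (nu^x * ga^x) (x) mu says that,
       given (x, z), the variable y has law nu^x (integral_conditionalY);
       hence reweighting by a function of (x, z) does not change l^XY, so
       li lies in Pi(l^XY, ga).  Extremality of l gives l1 = l2, so Q1 = Q2.
   (3b) is the lifting lemma along the projection onto X * Z, using (3a). *)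

Lemma measurable_preimageT {d d'} {T : measurableType d} {U : measurableType d'}
  {f : T -> U} : measurable_fun setT f ->
  forall A, measurable A -> measurable (f @^-1` A).
Proof. by move=> mf A mA; rewrite -[X in measurable X]setTI; exact: mf. Qed.

Section push_measure.
Context {R : realType} d d' (T : measurableType d) (U : measurableType d')
  (m : {finite_measure set T -> \bar R}) (f : T -> U) (mf : measurable_fun setT f).

(* The push-forward of a finite measure along a measurable map, as a finite
   measure; the measurability proof is an argument so that the measure
   structure of the library's pushforward can be attached to it. *)
Definition push (_ : measurable_fun setT f) : set U -> \bar R := pushforward m f.

HB.instance Definition _ := Measure.copy (push mf)
  (measure_function_pushforward__canonical__measure_function_Measure m mf).

Let push_fin : fin_num_fun (push mf).
Proof. by move=> A mA; apply: fin_num_measure; exact: measurable_preimageT. Qed.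

HB.instance Definition _ := Measure_isFinite.Build _ _ _ (push mf) push_fin.

End push_measure.
Arguments push {R d d' T U} m {f} _.

Section density_measure.
Context {R : realType} d (T : measurableType d) (m : {measure set T -> \bar R})
  (k : T -> \bar R) (mk : measurable_fun setT k) (k0 : forall x, 0 <= k x).

Definition density (_ : measurable_fun setT k) (_ : forall x, 0 <= k x) :
  set T -> \bar R := fun A => \int[m]_(x in A) k x.

Let density0 : density mk k0 set0 = 0.
Proof. by rewrite /density integral_set0. Qed.

Let density_ge0 A : 0 <= density mk k0 A.
Proof. by apply: integral_ge0 => x _; exact: k0. Qed.

Let density_sigma_additive : semi_sigma_additive (density mk k0).
Proof. exact: semi_sigma_additive_nng_induced. Qed.

HB.instance Definition _ := isMeasure.Build _ _ _ (density mk k0)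
  density0 density_ge0 density_sigma_additive.

End density_measure.
Arguments density {R d T} m {k} _ _.

Section measure_tools.
Context {R : realType}.

Lemma integral_density {d} {T : measurableType d}
  {nu : {finite_measure set T -> \bar R}} {mu : {sigma_finite_measure set T -> \bar R}}
  {k : T -> \bar R} : measurable_fun setT k -> (forall x, 0 <= k x) ->
  (forall A, measurable A -> nu A = \int[mu]_(x in A) k x) ->
  forall h, measurable_fun setT h -> (forall x, 0 <= h x) ->
  \int[mu]_x (h x * k x) = \int[nu]_x h x.
Proof.
move=> mk k0 nuk h mh h0.
have numu : nu `<< mu.
  apply/null_content_dominatesP => A mA muA.
  by rewrite nuk// null_set_integral//; exact: measurable_funTS.
rewrite -(Radon_Nikodym_SigmaFinite.change_of_variables numu h0 measurableT mh).
have fi := Radon_Nikodym_SigmaFinite.f_integrable numu.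
apply: ae_eq_integral => //.
- exact: emeasurable_funM.
- by apply: emeasurable_funM => //; exact: measurable_int fi.
apply: ae_eqe_mul2l; apply: ae_eq_sym; apply: integral_ae_eq => //.
by move=> E _ mE; rewrite -nuk// -Radon_Nikodym_SigmaFinite.f_integral.
Qed.

Lemma integral_mrestr d (T : measurableType d) (m : {finite_measure set T -> \bar R})
  (D : set T) (mD : measurable D) (h : T -> \bar R) :
  measurable_fun setT h -> (forall x, 0 <= h x) ->
  \int[mrestr m mD]_x h x = \int[m]_(x in D) h x.
Proof.
move=> mh h0.
rewrite -(@integral_density _ _ (mrestr m mD) m (fun x => (\1_D x)%:E)) //.
- rewrite [RHS]integral_mkcond; apply: eq_integral => x _.
  by rewrite patchE indicE; case: ifPn => _; rewrite ?mule1 ?mule0.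
- by apply/measurable_EFinP; exact: measurable_indic.
- by move=> A mA; rewrite integral_indic// /mrestr setIC.
Qed.

Lemma eq_integral_patch d (T : measurableType d) (m : {measure set T -> \bar R})
  D1 D2 (f1 f2 : T -> \bar R) : (forall x, (f1 \_ D1) x = (f2 \_ D2) x) ->
  \int[m]_(x in D1) f1 x = \int[m]_(x in D2) f2 x.
Proof.
by move=> h; rewrite integral_mkcond [RHS]integral_mkcond; apply: eq_integral.
Qed.

Lemma measure_prod_unique {dX dY} {X : measurableType dX} {Y : measurableType dY}
  {m1 m2 : {measure set (X * Y) -> \bar R}} : m1 setT < +oo ->
  (forall A B, measurable A -> measurable B -> m1 (A `*` B) = m2 (A `*` B)) ->
  forall E, measurable E -> m1 E = m2 E.
Proof.
move=> m1oo hAB E mE.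
apply: (measure_unique [set A `*` B | A in measurable & B in measurable]
  (fun _ => setT)) => //.
- exact: measurable_prod_measurableType.
- move=> U V [U1 mU1 [U2 mU2 <-]] [V1 mV1 [V2 mV2 <-]].
  exists (U1 `&` V1); first exact: measurableI.
  by exists (U2 `&` V2); [exact: measurableI|rewrite setXI].
- by move=> _; exists setT => //; exists setT => //; rewrite setXTT.
- by rewrite bigcup_const.
- by move=> _ [A mA [B mB <-]]; exact: hAB.
Qed.

Lemma conv_eq0 (t : R) (a b : \bar R) : (0 < t < 1)%R -> 0 <= a -> 0 <= b ->
  t%:E * a + (1 - t)%:E * b = 0 -> a = 0 /\ b = 0.
Proof.
move=> /andP[t0 t1] a0 b0 /eqP.
have t0' : 0 <= t%:E by rewrite lee_fin ltW.
have t1' : 0 <= (1 - t)%:E by rewrite lee_fin subr_ge0 ltW.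
rewrite padde_eq0; [|exact: mule_ge0|exact: mule_ge0].
move=> /andP[]; rewrite !mule_eq0 !eqe (gt_eqF t0) subr_eq0 (gt_eqF t1) /=.
by move=> /eqP -> /eqP ->.
Qed.

Lemma conv_id (t : R) (a : \bar R) : a \is a fin_num ->
  t%:E * a + (1 - t)%:E * a = a.
Proof.
by move: a => [r| |] //= _; rewrite -!EFinM -EFinD mulrBl mul1r addrC subrK.
Qed.

Lemma ge0_integral_conv {t : R} : (0 <= t)%R -> (t <= 1)%R ->
  forall d (T : measurableType d) (m : {measure set T -> \bar R}) D
    (g1 g2 : T -> \bar R),
  measurable D -> measurable_fun setT g1 -> measurable_fun setT g2 ->
  (forall x, 0 <= g1 x) -> (forall x, 0 <= g2 x) ->
  \int[m]_(x in D) (t%:E * g1 x + (1 - t)%:E * g2 x) =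
  t%:E * \int[m]_(x in D) g1 x + (1 - t)%:E * \int[m]_(x in D) g2 x.
Proof.
move=> t0 t1 d T m D g1 g2 mD mg1 mg2 g10 g20.
have t0' : 0 <= t%:E by rewrite lee_fin.
have t1' : 0 <= (1 - t)%:E by rewrite lee_fin subr_ge0.
rewrite ge0_integralD //.
- by rewrite !ge0_integralZl //; exact: measurable_funTS.
- by move=> x _; apply: mule_ge0.
- by apply: emeasurable_funM => //; exact: measurable_funTS.
- by move=> x _; apply: mule_ge0.
- by apply: emeasurable_funM => //; exact: measurable_funTS.
Qed.

Lemma conv_dominates {d} {T : measurableType d}
  {L Q1 Q2 : {measure set T -> \bar R}} {t : R} : (0 < t < 1)%R ->
  (forall A, measurable A -> L A = t%:E * Q1 A + (1 - t)%:E * Q2 A) ->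
  Q1 `<< L /\ Q2 `<< L.
Proof.
move=> t01 LQ.
have null A : measurable A -> L A = 0 -> Q1 A = 0 /\ Q2 A = 0.
  move=> mA LA0; apply: (@conv_eq0 t) => //; rewrite -LQ//.
by split; apply/null_content_dominatesP => A mA /(null A mA) [].
Qed.

End measure_tools.

Section probability_facts.
Context {R : realType}.

Lemma is_probP d (T : measurableType d) (m : {measure set T -> \bar R}) :
  m setT = 1 -> is_prob m.
Proof.
move=> m1; exists (mnormalize m (dirac point)) => A mA.
by rewrite /= /mnormalize m1 onee_eq0 /= invr1 mule1.
Qed.

Lemma meq_push {d dU} {T : measurableType d} {U : measurableType dU} {f : T -> U}
  {m1 m2 : set T -> \bar R} : measurable_fun setT f -> meq m1 m2 ->
  meq (fun E => m1 (f @^-1` E)) (fun E => m2 (f @^-1` E)).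
Proof. by move=> mf h12 A mA; apply: h12; exact: measurable_preimageT. Qed.

Lemma is_prob_meq d (T : measurableType d) (m1 m2 : set T -> \bar R) :
  is_prob m1 -> meq m1 m2 -> is_prob m2.
Proof. by move=> [Q hQ] h12; exists Q => A mA; rewrite hQ// h12. Qed.

Lemma is_prob_fin_num d (T : measurableType d) (m : set T -> \bar R) A :
  is_prob m -> measurable A -> m A \is a fin_num.
Proof. by move=> [Q hQ] mA; rewrite -hQ // fin_num_measure. Qed.

Lemma is_prob_push {d dU} {T : measurableType d} {U : measurableType dU}
  {f : T -> U} {m : set T -> \bar R} : measurable_fun setT f ->
  is_prob m -> is_prob (fun E => m (f @^-1` E)).
Proof.
move=> mf [Q hQ]; apply: (@is_prob_meq _ _ (push Q mf)).
  by apply: is_probP; rewrite /= /push /pushforward preimage_setT probability_setT.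
by move=> A mA; rewrite /= /push /pushforward hQ //; exact: measurable_preimageT.
Qed.

End probability_facts.

Section extreme_points.
Context {R : realType}.

Lemma extreme_point_sub {d} {T : measurableType d} {S S' : set (set T -> \bar R)} {l} :
  S' `<=` S -> S' l -> extreme_point S l -> extreme_point S' l.
Proof.
move=> SS' S'l [_ e]; split => // m1 m2 t h1 h2 t01 hm.
exact: (e m1 m2 t (SS' _ h1) (SS' _ h2) t01 hm).
Qed.

Lemma extreme_point_lift {d dU} {T : measurableType d} {U : measurableType dU}
  {f : T -> U} {S : set (set T -> \bar R)} {S2 : set (set U -> \bar R)}
  {l : set T -> \bar R} : measurable_fun setT f ->
  S l -> (forall r, S r -> is_prob r) ->
  (forall r, S r -> S2 (fun E => r (f @^-1` E))) ->
  extreme_point [set r | S r /\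
    meq (fun E => r (f @^-1` E)) (fun E => l (f @^-1` E))] l ->
  extreme_point S2 (fun E => l (f @^-1` E)) ->
  extreme_point S l.
Proof.
move=> mf Sl Sprob SS2 [_ e1] [_ e2]; split => // m1 m2 t Sm1 Sm2 t01 hl.
have mpre := measurable_preimageT mf.
have hproj : meq (fun E => l (f @^-1` E))
    (fun A => t%:E * m1 (f @^-1` A) + (1 - t)%:E * m2 (f @^-1` A)).
  by move=> A mA; rewrite hl //; exact: mpre.
have e := e2 _ _ t (SS2 _ Sm1) (SS2 _ Sm2) t01 hproj.
have m1l : meq (fun E => m1 (f @^-1` E)) (fun E => l (f @^-1` E)).
  move=> A mA; rewrite hproj // -(e A mA) conv_id //.
  by apply: is_prob_fin_num; [exact: Sprob|exact: mpre].
have m2l : meq (fun E => m2 (f @^-1` E)) (fun E => l (f @^-1` E)).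
  by move=> A mA; rewrite -(e A mA); exact: m1l.
exact: (e1 m1 m2 t (conj Sm1 m1l) (conj Sm2 m2l) t01 hl).
Qed.

End extreme_points.

Section density_lift.
Context {R : realType} {dW dV} {W : measurableType dW} {V : measurableType dV}
  (P : {finite_measure set W -> \bar R}) {phi : W -> V}
  (mphi : measurable_fun setT phi).

Local Notation L := (push P mphi).
Local Notation rnd Q := (Radon_Nikodym_SigmaFinite.f Q L).

Definition density_lift (Q : {finite_measure set V -> \bar R}) : set W -> \bar R :=
  fun E => \int[P]_(w in E) rnd Q (phi w).

Lemma measurable_rnd {Q : {finite_measure set V -> \bar R}} :
  Q `<< L -> measurable_fun setT (rnd Q).
Proof.
by move=> QL; exact: measurable_int (Radon_Nikodym_SigmaFinite.f_integrable QL).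
Qed.

Lemma density_lift_push {Q : {finite_measure set V -> \bar R}} : Q `<< L ->
  forall D, measurable D -> density_lift Q (phi @^-1` D) = Q D.
Proof.
move=> QL D mD; rewrite /density_lift -ge0_integral_pushforward//.
- by rewrite -(Radon_Nikodym_SigmaFinite.f_integral QL).
- exact/measurable_funTS/measurable_rnd.
- by move=> v _; exact: Radon_Nikodym_SigmaFinite.f_ge0.
Qed.

Lemma is_prob_density_lift {Q : {finite_measure set V -> \bar R}} :
  Q `<< L -> Q setT = 1 -> is_prob (density_lift Q).
Proof.
move=> QL Q1.
have mf := measurableT_comp (measurable_rnd QL) mphi.
have f0 w : 0 <= (rnd Q \o phi) w by exact: Radon_Nikodym_SigmaFinite.f_ge0.
apply: (@is_probP _ _ _ (density P mf f0)).
by rewrite /= /density -(preimage_setT phi) -[RHS]Q1 -(density_lift_push QL).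
Qed.

Lemma ae_eq_push {g h : V -> \bar R} :
  ae_eq L setT g h -> ae_eq P setT (g \o phi) (h \o phi).
Proof.
move=> [N [mN LN0 subN]]; exists (phi @^-1` N); split => //.
- exact: measurable_preimageT.
- by move=> w /= hw; apply: subN => /= gh; apply: hw => _; exact: gh.
Qed.

Lemma density_lift_mixture (Q1 Q2 : {finite_measure set V -> \bar R}) (t : R) :
  (0 < t < 1)%R ->
  (forall A, measurable A -> L A = t%:E * Q1 A + (1 - t)%:E * Q2 A) ->
  forall E, measurable E ->
  P E = t%:E * density_lift Q1 E + (1 - t)%:E * density_lift Q2 E.
Proof.
move=> t01 LQ E mE.
have [dom1 dom2] := conv_dominates t01 LQ.
have mf1 := measurable_rnd dom1; have mf2 := measurable_rnd dom2.
have f10 := Radon_Nikodym_SigmaFinite.f_ge0 dom1.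
have f20 := Radon_Nikodym_SigmaFinite.f_ge0 dom2.
case/andP: (t01) => /ltW t0 /ltW t1.
pose s v := t%:E * rnd Q1 v + (1 - t)%:E * rnd Q2 v.
have ms : measurable_fun setT s.
  by apply: emeasurable_funD; apply: emeasurable_funM => //; exact: measurable_cst.
have intD := ge0_integral_conv t0 t1.
have s1 : ae_eq L setT (EFin \o cst 1%R) s.
  apply: integral_ae_eq => //; first exact: finite_measure_integrable_cst.
  move=> D _ mD; transitivity (\int[L]_(x in D) (cst 1) x) => //.
  rewrite integral_cst // mul1e intD //.
  rewrite -(Radon_Nikodym_SigmaFinite.f_integral dom1 mD).
  by rewrite -(Radon_Nikodym_SigmaFinite.f_integral dom2 mD); exact: LQ.
transitivity (\int[P]_(w in E) s (phi w)); last first.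
  by rewrite intD //; exact: measurableT_comp.
rewrite -[LHS]mul1e -integral_cst //; apply: ae_eq_integral => //.
- exact/measurable_funTS/measurableT_comp.
- exact: ae_eq_subset (subsetT E) (ae_eq_push s1).
Qed.

End density_lift.
Arguments measurable_rnd {R dW dV W V P phi mphi Q}.
Arguments density_lift_push {R dW dV W V P phi mphi Q}.
Arguments is_prob_density_lift {R dW dV W V P phi mphi Q}.

Section projection_XZ.
Context dX dY dZ (X : measurableType dX) (Y : measurableType dY)
  (Z : measurableType dZ).

Definition piXZ (p : (X * Y * Z)%type) : (X * Z)%type := (p.1.1, p.2).

Lemma measurable_piXZ : measurable_fun setT piXZ.
Proof.
apply: measurable_fun_pair; last exact: measurable_snd.
exact: measurableT_comp.
Qed.

End projection_XZ.
Arguments piXZ {dX dY dZ X Y Z}.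
Arguments measurable_piXZ {dX dY dZ X Y Z}.

Section kernel_coupling.
Context {R : realType} dX dY dZ (X : measurableType dX) (Y : measurableType dY)
  (Z : measurableType dZ).
Variables (mu : probability X R) (nu : set Y -> \bar R) (ga : set Z -> \bar R)
  (l : set (X * Y * Z)%type -> \bar R) (P : probability (X * Y * Z)%type R)
  (nux : R.-pker X ~> Y) (gax : R.-pker X ~> Z).
Hypothesis hl : Pi3 mu nu ga l.
Hypothesis hP : meq P l.
(* l = (nu^x * ga^x) (x) mu, l^XY = nu^x (x) mu and l^XZ = ga^x (x) mu *)
Hypothesis l_rect : forall A B C, measurable A -> measurable B -> measurable C ->
  l (A `*` B `*` C) = \int[mu]_(x in A) (nux x B * gax x C).
Hypothesis lXY_rect : forall A B, measurable A -> measurable B ->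
  projXY l (A `*` B) = \int[mu]_(x in A) nux x B.
Hypothesis lXZ_rect : forall A C, measurable A -> measurable C ->
  projXZ l (A `*` C) = \int[mu]_(x in A) gax x C.

Local Notation L := (push P measurable_piXZ).

Let mpiXZ := measurable_preimageT (@measurable_piXZ _ _ _ X Y Z).

Let L_rect A C : measurable A -> measurable C ->
  L (A `*` C) = \int[mu]_(x in A) gax x C.
Proof.
move=> mA mC; rewrite -lXZ_rect// /push /pushforward /projXZ -hP//.
by apply: mpiXZ; exact: measurableX.
Qed.

(* Disintegration of L along X: ga^x is the conditional law of z given x. *)
Lemma integral_L_slabZ C (phi : X -> \bar R) : measurable C ->
  measurable_fun setT phi -> (forall x, 0 <= phi x) ->
  \int[mu]_x (phi x * gax x C) = \int[L]_(u in setT `*` C) phi u.1.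
Proof.
move=> mC mphi phi0.
have mTC : measurable (@setT X `*` C) by exact: measurableX.
pose rho := push (mrestr L mTC) (@measurable_fst _ _ X Z).
rewrite (@integral_density _ _ _ rho mu (fun x => gax x C)) //.
- rewrite [LHS]ge0_integral_pushforward // preimage_setT.
  rewrite integral_mrestr //; first exact: (measurableT_comp mphi measurable_fst).
  by move=> u; exact: phi0.
- exact: measurable_kernel.
- move=> A mA; rewrite -L_rect//; rewrite /rho /push /pushforward /mrestr /=.
  by congr (L _); rewrite -setXT -setXI setIT setTI.
Qed.

Let measurable_slabY {B : set Y} :
  measurable B -> measurable (@setT X `*` B `*` @setT Z).
Proof. by move=> mB; apply: measurableX => //; exact: measurableX. Qed.

(* The part of l where y lies in B, seen on X * Z, has density nu^x(B)
   with respect to L: conditionally on (x, z), y has law nu^x. *)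
Lemma slabY_density (B : set Y) (mB : measurable B) D : measurable D ->
  push (mrestr P (measurable_slabY mB)) measurable_piXZ D =
  \int[L]_(u in D) nux u.1 B.
Proof.
move=> mD.
have mkB := measurableT_comp (measurable_kernel nux B mB) (@measurable_fst _ _ X Z).
have kB0 (u : (X * Z)%type) : 0 <= nux u.1 B by exact: measure_ge0.
apply: (measure_prod_unique (m2 := density L mkB kB0)) => //.
  exact: fin_num_fun_lty (fin_num_measure _).
move=> A C mA mC; rewrite /push /pushforward /= /mrestr /density /=.
have -> : piXZ @^-1` (A `*` C) `&` (setT `*` B `*` setT) = A `*` B `*` C.
  apply/seteqP; split => -[[x y] z] /=.
    by move=> [[? ?] [[_ ?] _]].
  by move=> [[? ?] ?].
rewrite hP; last by do 2 apply: measurableX => //.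
pose phi := (fun x => nux x B) \_ A.
have mphi : measurable_fun setT phi.
  exact: (measurable_restrictT _ mA).1 (measurable_funTS (measurable_kernel nux B mB)).
have phi0 x : 0 <= phi x by rewrite /phi patchE; case: ifPn.
rewrite l_rect // (_ : \int[mu]_(x in A) _ = \int[mu]_x (phi x * gax x C)).
  rewrite integral_L_slabZ //; apply: eq_integral_patch => -[x z].
  by rewrite !patchE !in_setX in_setT /= /phi patchE; case: (x \in A); case: (z \in C).
apply: eq_integral_patch => x; rewrite !patchE in_setT /phi patchE.
by case: (x \in A); rewrite ?mul0e.
Qed.

Lemma integral_conditionalY (B : set Y) (h : (X * Z)%type -> \bar R) : measurable B ->
  measurable_fun setT h -> (forall u, 0 <= h u) ->
  \int[L]_u (h u * nux u.1 B) = \int[P]_(w in setT `*` B `*` setT) h (piXZ w).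
Proof.
move=> mB mh h0.
have mkB := measurableT_comp (measurable_kernel nux B mB) (@measurable_fst _ _ X Z).
have kB0 (u : (X * Z)%type) : 0 <= nux u.1 B by exact: measure_ge0.
rewrite (integral_density mkB kB0 (slabY_density B mB) _ mh h0).
rewrite ge0_integral_pushforward //; last exact: measurable_piXZ.
rewrite preimage_setT integral_mrestr //.
  exact: (measurableT_comp mh measurable_piXZ).
by move=> w; exact: h0.
Qed.

Local Notation lift Q := (density_lift P measurable_piXZ Q).

Lemma density_lift_rectXY (Q : {finite_measure set (X * Z)%type -> \bar R}) :
  Q `<< L -> meq (proj1 Q) mu -> forall A B, measurable A -> measurable B ->
  lift Q (A `*` B `*` setT) = P (A `*` B `*` setT).
Proof.
move=> QL HQ1 A B mA mB.
set f := Radon_Nikodym_SigmaFinite.f Q L.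
have f0 : forall u, 0 <= f u := Radon_Nikodym_SigmaFinite.f_ge0 QL.
have mf : measurable_fun setT f := measurable_rnd QL.
have mAT : measurable (A `*` @setT Z) by exact: measurableX.
pose h := f \_ (A `*` @setT Z).
have mh : measurable_fun setT h.
  exact: (measurable_restrictT f mAT).1 (measurable_funTS mf).
have h0 u : 0 <= h u by rewrite /h patchE; case: ifPn.
pose g := (fun x => nux x B) \_ A.
have mg : measurable_fun setT g.
  exact: (measurable_restrictT _ mA).1 (measurable_funTS (measurable_kernel nux B mB)).
have g0 x : 0 <= g x by rewrite /g patchE; case: ifPn.
transitivity (\int[P]_(w in setT `*` B `*` setT) h (piXZ w)).
  apply: eq_integral_patch => -[[x y] z]; rewrite /h !patchE !in_setX !in_setT /=.
  by case: (x \in A); case: (y \in B).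
rewrite -integral_conditionalY //.
transitivity (\int[L]_u ((g \o fst) u * f u)).
  apply: eq_integral => -[x z] _; rewrite /h /g /= !patchE !in_setX in_setT /=.
  by case: (x \in A) => /=; rewrite ?mul0e ?mule0 // muleC.
rewrite (Radon_Nikodym_SigmaFinite.change_of_variables QL _ measurableT);
  [|by move=> u; exact: g0|exact: measurableT_comp mg measurable_fst].
transitivity (\int[mu]_x g x).
  rewrite -(@ge0_integral_pushforward _ _ _ _ _ fst measurable_fst Q setT g
    measurableT (measurable_funTS mg) (fun u _ => g0 u)).
  by apply: eq_measure_integral => A0 mA0 _; rewrite /= /pushforward -HQ1.
transitivity (\int[mu]_(x in A) nux x B).
  by apply: eq_integral_patch => x; rewrite /g !patchE in_setT.
rewrite -lXY_rect // setXT /projXY -hP //.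
by apply: measurable_preimageT measurable_fst _ _; exact: measurableX.
Qed.

Lemma density_lift_coupling {Q : {finite_measure set (X * Z)%type -> \bar R}} :
  Q `<< L -> meq (proj1 Q) mu -> meq (proj2 Q) ga -> PiXY mu nu ga l (lift Q).
Proof.
move=> QL HQ1 HQ2.
have liftQ := density_lift_push (mphi := measurable_piXZ) QL.
have Q1 : Q setT = 1.
  by have := HQ1 setT measurableT; rewrite /proj1 preimage_setT probability_setT.
have plift := is_prob_density_lift (mphi := measurable_piXZ) QL Q1.
have mfst (D : set (X * Y)%type) : measurable D ->
    measurable ((fun p : (X * Y * Z)%type => p.1) @^-1` D).
  by move=> mD; exact: measurable_preimageT measurable_fst _ mD.
have liftXY : meq (projXY (lift Q)) (projXY l).
  case: plift => Pl hPl D mD.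
  rewrite /projXY -hPl -?[l _]hP; [|exact: mfst..].
  apply: (measure_prod_unique (m1 := push Pl measurable_fst)
                              (m2 := push P measurable_fst)) => //.
    exact: fin_num_fun_lty (fin_num_measure _).
  move=> A B mA mB; rewrite /push /pushforward /= -setXT hPl //.
    exact: density_lift_rectXY.
  by do 2 apply: measurableX => //.
case: hl => _ [_ [hnu _]].
split; last exact: liftXY.
split; first exact: plift.
split; [|split].
- move=> E mE; rewrite -HQ1 // /proj1 -liftQ //.
  exact: measurable_preimageT measurable_fst _ mE.
- move=> E mE; rewrite /proj2 liftXY; first exact: hnu.
  exact: measurable_preimageT measurable_snd _ mE.
- move=> E mE; rewrite -HQ2 // /proj2 -liftQ //.
  exact: measurable_preimageT measurable_snd _ mE.
Qed.

Lemma extreme_marginalXZ :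
  extreme_point (PiXY mu nu ga l) l -> extreme_point (Pi2 mu ga) (projXZ l).
Proof.
move=> [_ ext].
have LlXZ : meq L (projXZ l).
  by move=> D mD; apply: hP; exact: mpiXZ.
case: (hl) => _ [hmu [_ hga]].
split.
  split; last by split.
  apply: is_prob_meq LlXZ; apply: (@is_probP _ _ _ L).
  by rewrite /= /push /pushforward preimage_setT probability_setT.
move=> p1 p2 t [[Q1 hQ1] [h11 h12]] [[Q2 hQ2] [h21 h22]] t01 lmix D mD.
have margQ (Q : probability (X * Z)%type R) (p : set (X * Z)%type -> \bar R) :
    meq Q p -> meq (proj1 p) mu -> meq (proj2 p) ga ->
    meq (proj1 Q) mu /\ meq (proj2 Q) ga.
  move=> hQ hp1 hp2; split=> E mE.
    by rewrite -hp1 //; exact: (meq_push measurable_fst hQ E mE).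
  by rewrite -hp2 //; exact: (meq_push measurable_snd hQ E mE).
have [HQ11 HQ12] := margQ Q1 p1 hQ1 h11 h12.
have [HQ21 HQ22] := margQ Q2 p2 hQ2 h21 h22.
have LQ A : measurable A -> L A = t%:E * Q1 A + (1 - t)%:E * Q2 A.
  by move=> mA; rewrite LlXZ // lmix // hQ1 // hQ2.
have [dom1 dom2] := conv_dominates t01 LQ.
have lmix' : meq l (fun E => t%:E * lift Q1 E + (1 - t)%:E * lift Q2 E).
  by move=> E mE; rewrite -hP //; exact: density_lift_mixture.
have e12 := ext _ _ t (density_lift_coupling dom1 HQ11 HQ12)
  (density_lift_coupling dom2 HQ21 HQ22) t01 lmix'.
rewrite -hQ1 // -hQ2 // -(density_lift_push (mphi := measurable_piXZ) dom1) //.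
rewrite -(density_lift_push (mphi := measurable_piXZ) dom2) //.
by apply: e12; exact: mpiXZ.
Qed.

End kernel_coupling.
Arguments extreme_marginalXZ {R dX dY dZ X Y Z mu nu ga l P nux gax}.

Theorem mainTheorem13 (R : realType)
  (TX TY TZ : completePseudoMetricType R)
  (hTX : hausdorff_space TX) (hTY : hausdorff_space TY) (hTZ : hausdorff_space TZ)
  (sTX : separable_space TX) (sTY : separable_space TY) (sTZ : separable_space TZ)
  (mu : probability (Borel TX) R) (nu : probability (Borel TY) R)
  (ga : probability (Borel TZ) R)
  (l : set (Borel TX * Borel TY * Borel TZ) -> \bar R)
  (hl : Pi3 mu nu ga l) :
  (* (1) *)
  (extreme_point (Pi3 mu nu ga) l ->
     extreme_point (PiXY mu nu ga l) l /\
     extreme_point (PiYZ mu nu ga l) l /\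
     extreme_point (PiXZ mu nu ga l) l) /\
  (* (2) *)
  (extreme_point (PiXY mu nu ga l) l ->
   extreme_point (Pi2 mu nu) (projXY l) ->
     extreme_point (Pi3 mu nu ga) l) /\
  (* (3) *)
  (forall (nux : R.-pker Borel TX ~> Borel TY) (gax : R.-pker Borel TX ~> Borel TZ),
     (* l = (nu^x \times gamma^x) \otimes mu, on measurable rectangles *)
     (forall A B C, measurable A -> measurable B -> measurable C ->
        l (A `*` B `*` C) = \int[mu]_(x in A) (nux x B * gax x C)) ->
     (* l^XY = nu^x \otimes mu *)
     (forall A B, measurable A -> measurable B ->
        projXY l (A `*` B) = \int[mu]_(x in A) nux x B) ->
     (* l^XZ = gamma^x \otimes mu *)
     (forall A C, measurable A -> measurable C ->
        projXZ l (A `*` C) = \int[mu]_(x in A) gax x C) ->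
     (* (3a) *)
     (extreme_point (PiXY mu nu ga l) l ->
        extreme_point (Pi2 mu ga) (projXZ l)) /\
     (* (3b) *)
     (extreme_point (PiXY mu nu ga l) l ->
      extreme_point (PiXZ mu nu ga l) l ->
        extreme_point (Pi3 mu nu ga) l)).
Proof.
have Pi3_prob r : Pi3 mu nu ga r -> is_prob r by case.
have Pi3_XY r : Pi3 mu nu ga r -> Pi2 mu nu (projXY r).
  by move=> [rp [r1 [r2 r3]]]; split; [exact: is_prob_push measurable_fst rp|split].
have Pi3_XZ r : Pi3 mu nu ga r -> Pi2 mu ga (projXZ r).
  by move=> [rp [r1 [r2 r3]]]; split; [exact: is_prob_push measurable_piXZ rp|split].
split.
  (* the three fibres are subsets of Pi(mu, nu, ga) containing l *)
  move=> ext; split; [|split]; apply: extreme_point_sub ext => //;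
    by [move=> r [] | split].
split.
  by move=> e1 e2; exact: extreme_point_lift measurable_fst hl Pi3_prob Pi3_XY e1 e2.
move=> nux gax l_rect lXY_rect lXZ_rect.
have [P hP] := hl.1.
have part3a := extreme_marginalXZ hl hP l_rect lXY_rect lXZ_rect.
split; first exact: part3a.
move=> e1 e2.
exact: extreme_point_lift measurable_piXZ hl Pi3_prob Pi3_XZ e2 (part3a e1).
Qed.
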